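(* Let $ABC$ be a triangle with incenter $I$ and circumcenter $O$, and let $H_A, H_B, H_C$ be the orthocenters of the triangles $BIC$, $CIA$, $AIB$ respectively. Let $O_A, O_B, O_C$ be the circumcenters of the triangles $AH_BH_C$, $BH_CH_A$, $CH_AH_B$ respectively. Then the circumcenter of triangle $O_AO_BO_C$ is the reflection of $O$ in $I$. *)

From mathcomp Require Import all_boot all_order all_algebra.
Set Implicit Arguments. Unset Strict Implicit. Unset Printing Implicit Defensive.
Import Order.TTheory GRing.Theory Num.Theory.
Local Open Scope ring_scope.

Section Plane.
Variable R : rcfType.
Definition point := (R * R)%type.

Definition padd (P Q : point) : point := (P.1 + Q.1, P.2 + Q.2).
Definition psub (P Q : point) : point := (P.1 - Q.1, P.2 - Q.2).
Definition pscale (k : R) (P : point) : point := (k * P.1, k * P.2).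
Definition dot (u v : point) : R := u.1 * v.1 + u.2 * v.2.
Definition cross (u v : point) : R := u.1 * v.2 - u.2 * v.1.
Definition sqdist (P Q : point) : R := dot (psub P Q) (psub P Q).

Definition triangle (A B C : point) : Prop := cross (psub B A) (psub C A) != 0.

Definition sqdist_line (P Q S : point) : R :=
  (cross (psub Q P) (psub S P)) ^+ 2 / sqdist Q S.

Definition strictly_inside (P A B C : point) : Prop :=
  exists a b c : R, [/\ 0 < a, 0 < b, 0 < c, a + b + c = 1 &
    P = padd (pscale a A) (padd (pscale b B) (pscale c C))].

Definition is_incenter (I A B C : point) : Prop :=
  [/\ triangle A B C, strictly_inside I A B C,
      sqdist_line I B C = sqdist_line I C A &
      sqdist_line I C A = sqdist_line I A B].

Definition is_circumcenter (O A B C : point) : Prop :=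
  [/\ triangle A B C, sqdist O A = sqdist O B & sqdist O B = sqdist O C].

Definition is_orthocenter (H A B C : point) : Prop :=
  [/\ triangle A B C, dot (psub H A) (psub B C) = 0 &
      dot (psub H B) (psub C A) = 0].

Definition reflect_pt (P Q : point) : point := psub (pscale 2 Q) P.
End Plane.

From mathcomp Require Import all_boot all_order all_algebra.
From mathcomp Require Import ring.
Set Implicit Arguments. Unset Strict Implicit. Unset Printing Implicit Defensive.
Import Order.TTheory GRing.Theory Num.Theory.
Local Open Scope ring_scope.

(* Put I at the origin and let s be the reflection in the line AI.  Then the
   circumcenter of A H_B H_C is O_A = s(O) - O, so for P = -O, the reflection
   of O in I, |O_A - P| = |s(O)| = |O| = |I - P|; the same holds for O_B and
   O_C.  The identity for O_A is checked in coordinates after a similarity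
   sends I to the origin and the side line CA to the line x = 1: the incircle
   becomes the unit circle, A = (1, u), C = (1, t), and B, H_B, H_C, O, O_A
   are rational functions of u and t. *)

Section ReflectedCircumcenter.
Variable R : rcfType.
Implicit Types (P Q S A B C H O w v x y f g : point R).

Lemma psub_eq0 P Q : psub P Q = (0, 0) -> P = Q.
Proof. by case: P Q => [p1 p2] [q1 q2] [/subr0_eq -> /subr0_eq ->]. Qed.

Lemma dot_psubl x y f : dot (psub x y) f = dot x f - dot y f.
Proof. by rewrite /dot /psub /=; ring. Qed.

Lemma dot_self_eq0 x : (dot x x == 0) = (x == (0, 0)).
Proof.
by case: x => x1 x2; rewrite /dot -!expr2 paddr_eq0 ?sqr_ge0 // !sqrf_eq0 xpair_eqE.
Qed.

Lemma dot_cross_eq0 x f g : cross f g != 0 -> dot x f = 0 -> dot x g = 0 ->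
  x = (0, 0).
Proof.
move=> fg xf xg; case: x xf xg => x1 x2 xf xg.
have e1 : x1 * cross f g = g.2 * dot (x1, x2) f - f.2 * dot (x1, x2) g.
  by rewrite /cross /dot /=; ring.
have e2 : x2 * cross f g = f.1 * dot (x1, x2) g - g.1 * dot (x1, x2) f.
  by rewrite /cross /dot /=; ring.
rewrite xf xg !mulr0 subr0 in e1 e2.
by move/eqP: e1 e2; rewrite mulf_eq0 (negPf fg) orbF => /eqP -> /eqP;
  rewrite mulf_eq0 (negPf fg) orbF => /eqP ->.
Qed.

Lemma circumcenter_uniq O O' A B C : is_circumcenter O A B C ->
  sqdist O' A = sqdist O' B -> sqdist O' B = sqdist O' C -> O = O'.
Proof.
have perp X Y : sqdist O X = sqdist O Y -> sqdist O' X = sqdist O' Y ->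
    dot (psub O O') (psub Y X) = 0.
  move=> eO eO'; apply: (@mulfI _ 2); first by rewrite pnatr_eq0.
  have -> : 2 * dot (psub O O') (psub Y X) =
      (sqdist O X - sqdist O Y) - (sqdist O' X - sqdist O' Y).
    by rewrite /sqdist /dot /psub /=; ring.
  by rewrite eO eO' !subrr mulr0.
case=> hABC hAB hBC hAB' hBC'; apply: psub_eq0.
apply: (dot_cross_eq0 (f := psub B A) (g := psub C B)); last 2 first.
- exact: perp.
- exact: perp.
have -> : cross (psub B A) (psub C B) = cross (psub B A) (psub C A).
  by rewrite /cross /psub /=; ring.
exact: hABC.
Qed.

Lemma orthocenter_uniq H H' A B C : is_orthocenter H A B C ->
  dot (psub H' A) (psub B C) = 0 -> dot (psub H' B) (psub C A) = 0 -> H = H'.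
Proof.
case=> hABC hA hB hA' hB'; apply: psub_eq0.
apply: (dot_cross_eq0 (f := psub B C) (g := psub C A)).
- have -> : cross (psub B C) (psub C A) = cross (psub B A) (psub C A).
    by rewrite /cross /psub /=; ring.
  exact: hABC.
- have -> : psub H H' = psub (psub H A) (psub H' A).
    by rewrite /psub /=; congr pair; ring.
  by rewrite dot_psubl hA hA' subrr.
- have -> : psub H H' = psub (psub H B) (psub H' B).
    by rewrite /psub /=; congr pair; ring.
  by rewrite dot_psubl hB hB' subrr.
Qed.

Definition pmul w P : point R := (w.1 * P.1 - w.2 * P.2, w.1 * P.2 + w.2 * P.1).

Definition similarity w v P : point R := padd (pmul w P) v.

Lemma dot_pmul w x y : dot (pmul w x) (pmul w y) = dot w w * dot x y.
Proof. by rewrite /dot /pmul /=; ring. Qed.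

Lemma cross_pmul w x y : cross (pmul w x) (pmul w y) = dot w w * cross x y.
Proof. by rewrite /cross /dot /pmul /=; ring. Qed.

Section Similarity.
Variables w v : point R.
Hypothesis w_neq0 : dot w w != 0.
Local Notation f := (similarity w v).

Lemma psub_similarity P Q : psub (f P) (f Q) = pmul w (psub P Q).
Proof. by rewrite /similarity /pmul /padd /psub /=; congr pair; ring. Qed.

Lemma reflect_pt_similarity P Q : reflect_pt (f P) (f Q) = f (reflect_pt P Q).
Proof.
by rewrite /reflect_pt /similarity /pmul /padd /psub /pscale /=; congr pair; ring.
Qed.

Lemma sqdist_similarity P Q : sqdist (f P) (f Q) = dot w w * sqdist P Q.
Proof. by rewrite /sqdist psub_similarity dot_pmul. Qed.

Lemma sqdist_line_similarity P Q S :
  sqdist_line (f P) (f Q) (f S) = dot w w * sqdist_line P Q S.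
Proof.
rewrite /sqdist_line sqdist_similarity !psub_similarity cross_pmul.
by rewrite exprMn invfM mulrACA [dot w w ^+ 2]expr2 mulfK.
Qed.

Lemma triangle_similarity A B C : triangle A B C -> triangle (f A) (f B) (f C).
Proof. by rewrite /triangle !psub_similarity cross_pmul mulf_eq0 negb_or w_neq0. Qed.

Lemma is_circumcenter_similarity O A B C :
  is_circumcenter O A B C -> is_circumcenter (f O) (f A) (f B) (f C).
Proof.
case=> hABC hAB hBC; split; first exact: triangle_similarity.
  by rewrite !sqdist_similarity hAB.
by rewrite !sqdist_similarity hBC.
Qed.

Lemma is_orthocenter_similarity H A B C :
  is_orthocenter H A B C -> is_orthocenter (f H) (f A) (f B) (f C).
Proof.
case=> hABC hA hB; split; first exact: triangle_similarity.
  by rewrite !psub_similarity dot_pmul hA mulr0.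
by rewrite !psub_similarity dot_pmul hB mulr0.
Qed.
End Similarity.

Lemma similarity_normalize I A C : cross (psub A I) (psub C I) != 0 ->
  exists w v, [/\ dot w w != 0, similarity w v I = (0, 0),
    (similarity w v A).1 = 1 & (similarity w v C).1 = 1].
Proof.
case: I A C => [i1 i2] [a1 a2] [c1 c2]; rewrite /cross /psub /= => hD.
set D := _ - _ in hD.
pose w : point R := ((c2 - a2) / D, (c1 - a1) / D).
exists w, (psub (0, 0) (pmul w (i1, i2))); split.
- rewrite dot_self_eq0 xpair_eqE !mulf_eq0 !invr_eq0 (negPf hD) !orbF !subr_eq0.
  by apply: contra hD => /andP[/eqP e2 /eqP e1]; rewrite /D e1 e2; apply/eqP; ring.
- by rewrite /similarity /padd /psub /=; congr pair; ring.
- by rewrite /similarity /padd /psub /pmul /w /D /=; field.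
- by rewrite /similarity /padd /psub /pmul /w /D /=; field.
Qed.

Lemma sqdist_lineC P Q S : sqdist_line P Q S = sqdist_line P S Q.
Proof.
rewrite /sqdist_line.
have -> : cross (psub Q P) (psub S P) = - cross (psub S P) (psub Q P).
  by rewrite /cross; ring.
have -> : sqdist Q S = sqdist S Q by rewrite /sqdist /dot /psub /=; ring.
by rewrite sqrrN.
Qed.

Lemma add1_sqr_neq0 (u : R) : 1 + u ^+ 2 != 0.
Proof. by rewrite lt0r_neq0 // ltr_wpDr ?sqr_ge0. Qed.

(* The tangents to the unit circle through (1, u) are x = 1 and the tangent
   at ((1 - u^2) / (1 + u^2), 2u / (1 + u^2)). *)
Lemma sqdist_line_unit (u : R) B : sqdist_line (0, 0) (1, u) B = 1 ->
  B.1 = 1 \/ dot B (1 - u ^+ 2, 2 * u) = 1 + u ^+ 2.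
Proof.
case: B => b1 b2; rewrite /sqdist_line /=.
have [->|hs] := eqVneq (sqdist (1, u) (b1, b2)) 0.
  by rewrite invr0 mulr0 => /eqP; rewrite eq_sym oner_eq0.
move/(canRL (divfK hs)); rewrite mul1r => /eqP; rewrite -subr_eq0.
have -> : cross (psub (1, u) (0, 0)) (psub (b1, b2) (0, 0)) ^+ 2
    - sqdist (1, u) (b1, b2) = (b1 - 1) * (1 + u ^+ 2 - dot (b1, b2) (1 - u ^+ 2, 2 * u)).
  by rewrite /cross /sqdist /dot /psub /=; ring.
by rewrite mulf_eq0 !subr_eq0 => /orP[/eqP|/eqP]; [left | right].
Qed.

Lemma sqdist_reflect_circumcenter_normal A B C O HB HC OA :
  A.1 = 1 -> C.1 = 1 -> triangle A B C ->
  sqdist_line (0, 0) A B = sqdist_line (0, 0) C A ->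
  sqdist_line (0, 0) B C = sqdist_line (0, 0) C A ->
  is_circumcenter O A B C ->
  is_orthocenter HB C (0, 0) A -> is_orthocenter HC A (0, 0) B ->
  is_circumcenter OA A HB HC ->
  sqdist (reflect_pt O (0, 0)) OA = sqdist (reflect_pt O (0, 0)) (0, 0).
Proof.
case: A => _ u /= ->; case: C => _ t /= ->; case: B => b1 b2.
move=> hABC hAB hBC hO hHB hHC hOA.
have /andP[hb1 htu] : (b1 != 1) && (t != u).
  move: hABC; rewrite /triangle /cross /psub /= subrr mulr0 subr0.
  by rewrite mulf_eq0 negb_or !subr_eq0.
have hCA : sqdist_line (0, 0) (1, t) (1, u) = 1.
  by rewrite /sqdist_line /cross /sqdist /dot /psub /=; field; rewrite subr_eq0.
rewrite hCA in hAB hBC; rewrite sqdist_lineC in hBC.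
have [/= b1E|tan_u] := sqdist_line_unit hAB; first by rewrite b1E eqxx in hb1.
have [/= b1E|tan_t] := sqdist_line_unit hBC; first by rewrite b1E eqxx in hb1.
(* Otherwise the tangents from A and C other than CA would be parallel. *)
have h1tu : 1 + t * u != 0.
  apply: contraNneq (mulf_neq0 (add1_sqr_neq0 t) (add1_sqr_neq0 u)) => h0.
  have -> : (1 + t ^+ 2) * (1 + u ^+ 2) =
      (1 + t * u) * dot (b1, b2) (1 - t * u, t + u)
      - ((1 + t ^+ 2) * (dot (b1, b2) (1 - u ^+ 2, 2 * u) - (1 + u ^+ 2))
         + (1 + u ^+ 2) * (dot (b1, b2) (1 - t ^+ 2, 2 * t) - (1 + t ^+ 2))) / 2.
    by rewrite /dot /=; field.
  by rewrite h0 tan_u tan_t !subrr !mulr0 mul0r addr0 mul0r subrr.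
have eB : (b1, b2) = ((1 - t * u) / (1 + t * u), (t + u) / (1 + t * u)).
  apply: psub_eq0.
  apply: (dot_cross_eq0 (f := (1 - u ^+ 2, 2 * u)) (g := (1 - t ^+ 2, 2 * t))).
  - have -> : cross (1 - u ^+ 2, 2 * u) (1 - t ^+ 2, 2 * t) =
        2 * (t - u) * (1 + t * u).
      by rewrite /cross /=; ring.
    by rewrite !mulf_neq0 ?pnatr_eq0 ?subr_eq0.
  - by rewrite dot_psubl tan_u /dot /=; field.
  - by rewrite dot_psubl tan_t /dot /=; field.
rewrite {}eB in hO hHC.
have eHB : HB = (1 + t * u, 0).
  by apply: (orthocenter_uniq hHB); rewrite /dot /psub /=; field.
have eHC : HC = ((1 - u ^+ 2) / (1 + t * u), 2 * u / (1 + t * u)).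
  by apply: (orthocenter_uniq hHC); rewrite /dot /psub /=; field.
rewrite {}eHB {}eHC in hOA.
pose x := (3 + t ^+ 2 + u ^+ 2 - t ^+ 2 * u ^+ 2) / (4 * (1 + t * u)).
pose y := (t + u) / 2.
have -> : O = (x, y).
  by apply: (circumcenter_uniq hO); rewrite /sqdist /dot /psub /x /y /=; field.
(* [m * (1, u)] is twice the projection of O on the line IA. *)
pose m := 2 * (x + y * u) / (1 + u ^+ 2).
have -> : OA = (m - 2 * x, m * u - 2 * y).
  apply: (circumcenter_uniq hOA); rewrite /sqdist /dot /psub /m /x /y /=;
  by field; rewrite ?add1_sqr_neq0 ?h1tu.
rewrite /reflect_pt /sqdist /dot /psub /pscale /m /=.
by field; rewrite ?add1_sqr_neq0 ?h1tu.
Qed.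

Lemma sqdist_reflect_circumcenter A B C I O HB HC OA :
  triangle A B C ->
  sqdist_line I A B = sqdist_line I C A ->
  sqdist_line I B C = sqdist_line I C A ->
  is_circumcenter O A B C ->
  is_orthocenter HB C I A -> is_orthocenter HC A I B ->
  is_circumcenter OA A HB HC ->
  sqdist (reflect_pt O I) OA = sqdist (reflect_pt O I) I.
Proof.
move=> hABC hAB hBC hO hHB hHC hOA.
have hCIA : cross (psub A I) (psub C I) != 0.
  case: hHB; rewrite /triangle => + _ _; apply: contra_neq => <-.
  by rewrite /cross /psub /=; ring.
have [w [v [hw fI fA fC]]] := similarity_normalize hCIA.
apply: (mulfI hw); rewrite -!(sqdist_similarity w v) -reflect_pt_similarity.
set f := similarity w v in fI fA fC *.
have := @sqdist_reflect_circumcenter_normal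
  (f A) (f B) (f C) (f O) (f HB) (f HC) (f OA) fA fC.
rewrite -fI; apply.
- exact: triangle_similarity.
- by rewrite !sqdist_line_similarity // hAB.
- by rewrite !sqdist_line_similarity // hBC.
- exact: is_circumcenter_similarity.
- exact: is_orthocenter_similarity.
- exact: is_orthocenter_similarity.
- exact: is_circumcenter_similarity.
Qed.

Lemma triangle_rot A B C : triangle A B C -> triangle B C A.
Proof.
by rewrite /triangle; apply: contra_neq => <-; rewrite /cross /psub /=; ring.
Qed.

Lemma is_circumcenter_rot O A B C :
  is_circumcenter O A B C -> is_circumcenter O B C A.
Proof.
by case=> hABC hAB hBC; split; [exact: triangle_rot | exact: hBC | rewrite -hBC].
Qed.
End ReflectedCircumcenter.

Theorem proposition5p5 (R : rcfType)
    (A B C I O HA HB HC OA OB OC : point R) :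
  triangle A B C ->
  is_incenter I A B C ->
  is_circumcenter O A B C ->
  is_orthocenter HA B I C ->
  is_orthocenter HB C I A ->
  is_orthocenter HC A I B ->
  is_circumcenter OA A HB HC ->
  is_circumcenter OB B HC HA ->
  is_circumcenter OC C HA HB ->
  let P := reflect_pt O I in
  sqdist P OA = sqdist P OB /\ sqdist P OB = sqdist P OC.
Proof.
move=> hABC [_ _ dBC_CA dCA_AB] hO hHA hHB hHC hOA hOB hOC P.
have dBC_AB := etrans dBC_CA dCA_AB.
have eA := sqdist_reflect_circumcenter hABC (esym dCA_AB) dBC_CA hO hHB hHC hOA.
have eB := sqdist_reflect_circumcenter (triangle_rot hABC) dBC_AB dCA_AB
  (is_circumcenter_rot hO) hHC hHA hOB.
have eC := sqdist_reflect_circumcenter (triangle_rot (triangle_rot hABC))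
  (esym dBC_CA) (esym dBC_AB) (is_circumcenter_rot (is_circumcenter_rot hO))
  hHA hHB hOC.
by rewrite /P eA eB eC.
Qed.
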